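(* Let $n\ge1$. (i) Suppose $\mathcal{C}\subseteq\mathbb{F}_2^{n+1}$ is a union $\mathcal{C}=\bigcup_{i=0}^{\lfloor n/2\rfloor}\mathcal{C}_i$, where for each $i$, $\mathcal{C}_i$ is a covering design $\mathcal{C}(n+1,\,n+1-2i,\,n-2i)$ (a set of vectors of weight $n+1-2i$ such that every vector of weight $n-2i$ is covered by one of them). Then deleting any one fixed coordinate from all vectors of $\mathcal{C}$ yields a banded asymmetric covering $\mathcal{D}(n,1)$. (ii) Conversely, let $\mathcal{D}\subseteq\mathbb{F}_2^n$ be a banded asymmetric covering $\mathcal{D}(n,1)$. Append to each vector of $\mathcal{D}$ a final bit $0$ or $1$ chosen so that the resulting vector of length $n+1$ has even co-weight. Then, for each $0\le i\le\lfloor n/2\rfloor$, the resulting vectors of weight $n+1-2i$ form a covering design $\mathcal{C}(n+1,n+1-2i,n-2i)$.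
   Context: Subsets are identified with indicator vectors; weight is Hamming weight and the co-weight of $u\in\mathbb{F}_2^n$ is $n-\mathrm{wt}(u)$. A vector $u$ covers $v$ if the support of $v$ is contained in that of $u$. An asymmetric covering $\mathcal{D}(n,1)$ is a set $\mathcal{D}\subseteq\mathbb{F}_2^n$ such that every $v\in\mathbb{F}_2^n$ either lies in $\mathcal{D}$ or is covered by some $u\in\mathcal{D}$ with $\mathrm{wt}(u)=\mathrm{wt}(v)+1$. It is banded if every $v\in\mathbb{F}_2^n$ of odd co-weight is covered by some $u\in\mathcal{D}$ with $\mathrm{wt}(u)=\mathrm{wt}(v)+1$. A covering design $\mathcal{C}(v,k,t)$ is a collection of $k$-subsets of a $v$-set such that every $t$-subset is contained in at least one of them. *)

(* Vectors of F_2^n are identified with their supports,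
   i.e. elements of {set 'I_n}; weight = #|u|, co-weight = n - #|u|. *)
From mathcomp Require Import all_boot.
Set Implicit Arguments. Unset Strict Implicit. Unset Printing Implicit Defensive.

Definition covers (n : nat) (u v : {set 'I_n}) : bool := v \subset u.

Definition coweight (n : nat) (u : {set 'I_n}) : nat := n - #|u|.

Definition asym_covering (n : nat) (D : {set {set 'I_n}}) : Prop :=
  forall v : {set 'I_n},
    v \in D \/ exists2 u, u \in D & covers u v /\ #|u| = #|v|.+1.

Definition banded (n : nat) (D : {set {set 'I_n}}) : Prop :=
  forall v : {set 'I_n}, odd (coweight v) ->
    exists2 u, u \in D & covers u v /\ #|u| = #|v|.+1.

Definition banded_asym_covering (n : nat) (D : {set {set 'I_n}}) : Prop :=
  asym_covering D /\ banded D.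

Definition covering_design (v k t : nat) (C : {set {set 'I_v}}) : Prop :=
  (forall A, A \in C -> #|A| = k) /\
  (forall T : {set 'I_v}, #|T| = t -> exists2 A, A \in C & T \subset A).

Definition delete_coord (n : nat) (j : 'I_n.+1) (A : {set 'I_n.+1}) : {set 'I_n} :=
  [set i : 'I_n | lift j i \in A].

(* append a final bit to d so that the result has even co-weight:
   the last bit is 1 iff the co-weight of d is even *)
Definition append_even (n : nat) (d : {set 'I_n}) : {set 'I_n.+1} :=
  (lift ord_max @: d) :|: (if ~~ odd (coweight d) then [set ord_max] else set0).

From mathcomp Require Import all_boot.
From mathcomp Require Import zify.
Set Implicit Arguments. Unset Strict Implicit. Unset Printing Implicit Defensive.

(* A subset of 'I_n.+1 is the same as a subset of 'I_n together with one bit at a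
   distinguished coordinate. (i) A vector v of length n, extended by the parity of its
   co-weight, has weight n - 2h for h = (coweight v)./2, hence lies in a block of the
   h-th design; deleting the coordinate from that block gives a vector of weight
   #|v| + 1 over v, or, for even co-weight, possibly v itself. (ii) A set T of size
   n - 2i splits into v and a bit b: for b = 1 the co-weight of v is odd and
   bandedness gives u in D of weight #|T| over v; for b = 0 the asymmetric covering
   gives v itself or such a u of weight #|T| + 1. In every case the even extension of
   u has weight n + 1 - 2i and contains T. *)

Definition insert_coord n (j : 'I_n.+1) (b : bool) (S : {set 'I_n}) : {set 'I_n.+1} :=
  lift j @: S :|: (if b then [set j] else set0).

Section InsertDelete.

Variables (n : nat) (j : 'I_n.+1).

Lemma mem_insert_coord_lift b S i : (lift j i \in insert_coord j b S) = (i \in S).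
Proof.
rewrite !inE mem_imset; last exact: lift_inj.
by case: b; rewrite ?inE ?orbF // eq_sym (negbTE (neq_lift j i)) orbF.
Qed.

Lemma pivot_notin_lift_imset (S : {set 'I_n}) : j \notin lift j @: S.
Proof. by apply/imsetP => -[i _ E]; have := neq_lift j i; rewrite -E eqxx. Qed.

Lemma mem_insert_coord_pivot b S : (j \in insert_coord j b S) = b.
Proof. by rewrite in_setU (negbTE (pivot_notin_lift_imset S)); case: b; rewrite ?inE ?eqxx. Qed.

Lemma insert_coordK b : cancel (insert_coord j b) (delete_coord j).
Proof. by move=> S; apply/setP => i; rewrite inE mem_insert_coord_lift. Qed.

Lemma delete_coordK (A : {set 'I_n.+1}) : insert_coord j (j \in A) (delete_coord j A) = A.
Proof.
apply/setP => x; case: (unliftP j x) => [i ->|->].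
  by rewrite mem_insert_coord_lift inE.
by rewrite mem_insert_coord_pivot.
Qed.

Lemma card_insert_coord b S : #|insert_coord j b S| = #|S| + b.
Proof.
have card_lift : #|lift j @: S| = #|S| by apply: card_imset; exact: lift_inj.
rewrite /insert_coord; case: b; last by rewrite setU0 card_lift addn0.
by rewrite setUC cardsU1 pivot_notin_lift_imset card_lift addnC.
Qed.

Lemma card_delete_coord (A : {set 'I_n.+1}) : #|A| = #|delete_coord j A| + (j \in A).
Proof. by rewrite -card_insert_coord delete_coordK. Qed.

Lemma insert_coord_subset b S (A : {set 'I_n.+1}) :
  (insert_coord j b S \subset A) = (S \subset delete_coord j A) && (b ==> (j \in A)).
Proof.
apply/subsetP/andP => [sub | [/subsetP sS jA] x].
  split; first by apply/subsetP => i iS; rewrite inE sub ?mem_insert_coord_lift.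
  by apply/implyP => hb; rewrite sub ?mem_insert_coord_pivot.
case: (unliftP j x) => [i ->|->].
  by rewrite mem_insert_coord_lift => /sS; rewrite inE.
by rewrite mem_insert_coord_pivot => /(implyP jA).
Qed.

Lemma insert_coordS b b' (S S' : {set 'I_n}) :
  S \subset S' -> b ==> b' -> insert_coord j b S \subset insert_coord j b' S'.
Proof. by move=> sS hb; rewrite insert_coord_subset insert_coordK mem_insert_coord_pivot sS. Qed.

End InsertDelete.

Lemma card_set_ord_le n (v : {set 'I_n}) : #|v| <= n.
Proof. by rewrite -[leqRHS]card_ord max_card. Qed.

Lemma card_append_even n (d : {set 'I_n}) : #|append_even d| = #|d| + ~~ odd (coweight d).
Proof. exact: card_insert_coord. Qed.

Section DesignToCovering.

Variables (n : nat) (Cs : nat -> {set {set 'I_n.+1}}) (j : 'I_n.+1).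
Hypothesis designs :
  forall i, i <= n./2 -> covering_design (n.+1 - 2 * i) (n - 2 * i) (Cs i).

Let C := \bigcup_(i < n./2.+1) Cs i.

Lemma design_cover_insert (v : {set 'I_n}) :
  exists2 A, A \in C &
    insert_coord j (odd (coweight v)) v \subset A /\ #|A| = #|v| + odd (coweight v) + 1.
Proof.
set c := coweight v; set h := c./2.
have cE : c = 2 * h + odd c by rewrite mul2n addnC odd_double_half.
have cv : #|v| + c = n by rewrite subnKC ?card_set_ord_le.
have hh : h <= n./2 by apply: half_leq; rewrite leq_subr.
have [cardC coverC] := designs hh.
have [|A hA sA] := coverC (insert_coord j (odd c) v); first by rewrite card_insert_coord; lia.
exists A; first by apply/bigcupP; exists (Ordinal (hh : h < n./2.+1)).
by split=> //; rewrite cardC //; lia.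
Qed.

Lemma delete_design_banded : banded (delete_coord j @: C).
Proof.
move=> v odd_cw; have [A hA] := design_cover_insert v.
rewrite odd_cw insert_coord_subset /= => -[/andP [sv jA] cardA].
exists (delete_coord j A); first exact: imset_f.
by split=> //; move: cardA; rewrite (card_delete_coord j A) jA /=; lia.
Qed.

Lemma delete_design_asym : asym_covering (delete_coord j @: C).
Proof.
move=> v; case odd_cw: (odd (coweight v)).
  by right; apply: delete_design_banded; rewrite odd_cw.
have [A hA] := design_cover_insert v.
rewrite odd_cw insert_coord_subset /= => -[/andP [sv _] cardA].
have dA : delete_coord j A \in delete_coord j @: C by exact: imset_f.
move: cardA; rewrite (card_delete_coord j A); case: (j \in A) => /= cardA.
  by left; suff -> : v = delete_coord j A by []; apply/eqP; rewrite eqEcard sv /=; lia.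
by right; exists (delete_coord j A) => //; split=> //; lia.
Qed.

End DesignToCovering.

Section CoveringToDesign.

Variables (n : nat) (D : {set {set 'I_n}}).
Hypothesis covD : banded_asym_covering D.

Lemma append_even_cover (b : bool) (v : {set 'I_n}) :
  #|v| + b <= n -> ~~ odd (n - (#|v| + b)) ->
  exists2 u, u \in D &
    insert_coord ord_max b v \subset append_even u /\ #|append_even u| = #|v| + b + 1.
Proof.
have [asymD bandD] := covD.
case: b => /= [|]; rewrite ?addn1 ?addn0 => le_n even_cw.
  have [|u uD [su cardu]] := bandD v; first by rewrite /coweight -subnSK.
  have cw_u : ~~ odd (coweight u) by rewrite /coweight cardu.
  exists u => //; rewrite card_append_even cw_u cardu.
  by split; [apply: insert_coordS | rewrite /= ?addn0 ?addn1 ?cardu].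
have [vD|[u uD [su cardu]]] := asymD v.
  exists v => //; rewrite card_append_even even_cw.
  by split; [apply: insert_coordS | rewrite /= ?addn0 ?addn1 ?cardu].
have cw_u : odd (coweight u).
  have hu := card_set_ord_le u; rewrite cardu in hu.
  by move: even_cw; rewrite /coweight cardu -(subnSK hu) /= negbK.
exists u => //; rewrite card_append_even cw_u.
by split; [apply: insert_coordS | rewrite /= ?addn0 ?addn1 ?cardu].
Qed.

End CoveringToDesign.

Theorem theorem3 (n : nat) (hn : 0 < n) :
  (forall (Cs : nat -> {set {set 'I_n.+1}}) (j : 'I_n.+1),
     (forall i, i <= n./2 -> covering_design (n.+1 - 2 * i) (n - 2 * i) (Cs i)) ->
     banded_asym_covering
       (delete_coord j @: (\bigcup_(i < n./2.+1) Cs i)))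
  /\
  (forall D : {set {set 'I_n}},
     banded_asym_covering D ->
     forall i, i <= n./2 ->
       covering_design (n.+1 - 2 * i) (n - 2 * i)
         [set append_even d | d in D & #|append_even d| == n.+1 - 2 * i]).
Proof.
split=> [Cs j designs | D covD i hi].
  by split; [apply: delete_design_asym | apply: delete_design_banded].
split=> [A /imsetP [d] | T cardT].
  by rewrite inE => /andP [_ /eqP card_d] ->.
rewrite -(delete_coordK ord_max T) in cardT *.
move: cardT; rewrite card_insert_coord => cardT.
have le_i : 2 * i <= n by rewrite mul2n -geq_half_double.
have [||u uD [sub cardu]] :=
  append_even_cover covD (b := ord_max \in T) (v := delete_coord ord_max T).
- by rewrite cardT leq_subr.
- by rewrite cardT subKn // mul2n odd_double.
exists (append_even u) => //; apply/imsetP; exists u => //.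
by rewrite inE uD cardu cardT /=; apply/eqP; lia.
Qed.
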